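(* Let $R$ be a complete discrete valuation ring with perfect residue field, fraction field $K$ and normalized valuation $v$. Let $E/K$ be an elliptic curve with additive reduction. Then $E$ has a minimal Weierstrass model over $R$, $$y^2+a_1xy+a_3y=x^3+a_2x^2+a_4x+a_6,$$ such that, writing $m=\min_{i\in\{1,2,3,4,6\}} \frac{v(a_i)}{i}$, $b_6=a_3^2+4a_6$ and $\delta=\operatorname{Disc}(x^3+a_2x^2+a_4x+a_6)$, the following holds according to the Kodaira type of $E$: - type $\mathrm{II}$: $m=\tfrac16$; - type $\mathrm{III}$: $m=\tfrac14$; - type $\mathrm{IV}$: $m=\tfrac13$ and $v(b_6)=2$; - type $\mathrm{I}_0^*$: $m=\tfrac12$ and $v(\delta)=6$; - type $\mathrm{I}_n^*$ with $n>0$: $m=\tfrac12$, $v(\delta)>6$ and $v(a_2^2-3a_4)=2$; - type $\mathrm{IV}^*$: $m=\tfrac23$ and $v(b_6)=4$; - type $\mathrm{III}^*$: $m=\tfrac34$; - type $\mathrm{II}^*$: $m=\tfrac56$. Conversely, if a Weierstrass equation $y^2+a_1xy+a_3y=x^3+a_2x^2+a_4x+a_6$ with $a_i\in K$ defining an elliptic curve $E/K$ satisfies one of the eight conditions listed above, then it is a minimal Weierstrass model of $E$ over $R$ and $E$ has the corresponding Kodaira type.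
   Context: Kodaira types are those of the special fibre of the minimal regular model (as determined by Tate's algorithm). A minimal Weierstrass model over $R$ is a Weierstrass equation with all $a_i\in R$ whose discriminant has minimal valuation among such models. If $a_i=0$ then $v(a_i)=\infty$. $\operatorname{Disc}$ denotes the discriminant of a polynomial. *)

From HB Require Import structures.
From mathcomp Require Import all_boot all_order all_algebra.
Set Implicit Arguments. Unset Strict Implicit. Unset Printing Implicit Defensive.
Import Order.TTheory GRing.Theory Num.Theory.
Local Open Scope ring_scope.

(* Discrete valuations.  A complete DVR R with fraction field K is      *)
(* encoded by K together with its normalized valuation v : K -> int     *)
(* (the value v 0 is irrelevant junk; v(0) = +oo is handled by vge).   *)
(* R = {x | vge v 0 x}.                                                 *)

Section Val.
Variables (K : fieldType) (v : K -> int).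

Definition vge (n : int) (x : K) : Prop := x = 0 \/ (n <= v x).
Definition vexact (n : int) (x : K) : Prop := x <> 0 /\ v x = n.

Definition normalized_discrete_valuation : Prop :=
  [/\ (forall x y : K, x <> 0 -> y <> 0 -> v (x * y) = v x + v y),
      (forall x y : K, x <> 0 -> y <> 0 -> x + y <> 0 ->
          Order.min (v x) (v y) <= v (x + y))
    & (exists pi : K, pi <> 0 /\ v pi = 1)].

Definition complete_valuation : Prop :=
  forall u : nat -> K,
    (forall N : int, exists M : nat, forall m n : nat,
        (M <= m)%N -> (M <= n)%N -> vge N (u m - u n)) ->
    exists l : K, forall N : int, exists M : nat, forall n : nat,
        (M <= n)%N -> vge N (u n - l).

(* the residue field k = R / (pi) is perfect: if k has characteristic p > 0
   then every element of k is a p-th power *)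
Definition perfect_residue_field : Prop :=
  forall p : nat, prime p -> vge 1 (p%:R : K) ->
    forall x : K, vge 0 x -> exists y : K, vge 0 y /\ vge 1 (y ^+ p - x).

End Val.

(* Weierstrass equations y^2 + a1 xy + a3 y = x^3 + a2 x^2 + a4 x + a6 *)

Record wcoef (K : Type) := WCoef { wa1 : K; wa2 : K; wa3 : K; wa4 : K; wa6 : K }.

Section Weierstrass.
Variable K : fieldType.
Implicit Types w : wcoef K.

Definition wb2 w := wa1 w ^+ 2 + 4%:R * wa2 w.
Definition wb4 w := 2%:R * wa4 w + wa1 w * wa3 w.
Definition wb6 w := wa3 w ^+ 2 + 4%:R * wa6 w.
Definition wb8 w := wa1 w ^+ 2 * wa6 w + 4%:R * wa2 w * wa6 w
                    - wa1 w * wa3 w * wa4 w + wa2 w * wa3 w ^+ 2 - wa4 w ^+ 2.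
Definition wc4 w := wb2 w ^+ 2 - 24%:R * wb4 w.
Definition wdisc w := - wb2 w ^+ 2 * wb8 w - 8%:R * wb4 w ^+ 3
                      - 27%:R * wb6 w ^+ 2 + 9%:R * wb2 w * wb4 w * wb6 w.

Definition disc_cubic (b c d : K) : K :=
  b ^+ 2 * c ^+ 2 - 4%:R * c ^+ 3 - 4%:R * b ^+ 3 * d - 27%:R * d ^+ 2
  + 18%:R * b * c * d.

Definition wdelta w := disc_cubic (wa2 w) (wa4 w) (wa6 w).

(* w' is obtained from w by the admissible change of variables
   x = u^2 x' + r, y = u^3 y' + s u^2 x' + t  (Silverman III.1.2) *)
Definition wiso w w' : Prop :=
  exists u r s t : K, u <> 0 /\
  [/\ u * wa1 w' = wa1 w + 2%:R * s,
      u ^+ 2 * wa2 w' = wa2 w - s * wa1 w + 3%:R * r - s ^+ 2,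
      u ^+ 3 * wa3 w' = wa3 w + r * wa1 w + 2%:R * t,
      u ^+ 4 * wa4 w' = wa4 w - s * wa3 w + 2%:R * r * wa2 w
                        - (t + r * s) * wa1 w + 3%:R * r ^+ 2 - 2%:R * s * t
    & u ^+ 6 * wa6 w' = wa6 w + r * wa4 w + r ^+ 2 * wa2 w + r ^+ 3
                        - t * wa3 w - t ^+ 2 - r * t * wa1 w].

Variable v : K -> int.

Definition integral_model w : Prop :=
  [/\ vge v 0 (wa1 w), vge v 0 (wa2 w), vge v 0 (wa3 w), vge v 0 (wa4 w)
    & vge v 0 (wa6 w)].

Definition minimal_model w0 w : Prop :=
  [/\ wiso w0 w, integral_model w &
      forall w', wiso w0 w' -> integral_model w' -> v (wdisc w) <= v (wdisc w')].

(* additive reduction: the reduction of a minimal model is singular with a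
   cusp, i.e. v(Delta) > 0 and v(c4) > 0 for a minimal model *)
Definition additive_reduction w0 : Prop :=
  exists w, [/\ minimal_model w0 w, 1 <= v (wdisc w) & vge v 1 (wc4 w)].

(* Kodaira types of additive reduction, via Tate's algorithm           *)
(* (Silverman, Advanced Topics, IV.9).  InStar_pos = I_n^* for some n>0 *)

Inductive additive_kodaira :=
  KII | KIII | KIV | KI0Star | KInStar_pos | KIVStar | KIIIStar | KIIStar.

Definition wF w (x : K) := x ^+ 3 + wa2 w * x ^+ 2 + wa4 w * x + wa6 w.
Definition wF' w (x : K) := 3%:R * x ^+ 2 + 2%:R * wa2 w * x + wa4 w.
Definition wG w (y : K) := y ^+ 2 + wa3 w * y - wa6 w.

(* singular point of the reduction at (0,0), additive (steps 2-3) *)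
Definition tate_A w : Prop :=
  [/\ vge v 1 (wa3 w), vge v 1 (wa4 w), vge v 1 (wa6 w) & vge v 1 (wb2 w)].
(* normalisation of step 6 *)
Definition tate_S w : Prop :=
  [/\ vge v 1 (wa1 w), vge v 1 (wa2 w), vge v 2 (wa3 w), vge v 2 (wa4 w)
    & vge v 3 (wa6 w)].
(* P(T) = T^3 + a2/pi T^2 + a4/pi^2 T + a6/pi^3 has a multiple root r mod pi
   (with rho = pi r):  pi | P(r), pi | P'(r) *)
Definition P_multiple_root w : Prop :=
  exists rho : K, [/\ vge v 1 rho, vge v 4 (wF w rho) & vge v 3 (wF' w rho)].
(* P(T) = (T - r)^3 mod pi *)
Definition P_triple_root w : Prop :=
  exists rho : K, [/\ vge v 1 rho, vge v 4 (wF w rho), vge v 3 (wF' w rho)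
                    & vge v 2 (wa2 w + 3%:R * rho)].
(* Q(Y) = Y^2 + a3/pi^2 Y - a6/pi^4 has a multiple root s mod pi
   (with sigma = pi^2 s) *)
Definition Q_multiple_root w : Prop :=
  exists sigma : K, [/\ vge v 2 sigma, vge v 5 (wG w sigma)
                      & vge v 3 (2%:R * sigma + wa3 w)].

Definition tate_cond (T : additive_kodaira) w : Prop :=
  match T with
  | KII => tate_A w /\ ~ vge v 2 (wa6 w)
  | KIII => [/\ tate_A w, vge v 2 (wa6 w) & ~ vge v 3 (wb8 w)]
  | KIV => [/\ tate_A w, vge v 2 (wa6 w), vge v 3 (wb8 w) & ~ vge v 3 (wb6 w)]
  | KI0Star => tate_S w /\ ~ P_multiple_root w
  | KInStar_pos => [/\ tate_S w, P_multiple_root w & ~ P_triple_root w]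
  | KIVStar => vge v 1 (wa1 w) /\ [/\ vge v 2 (wa2 w), vge v 2 (wa3 w),
                   vge v 3 (wa4 w), vge v 4 (wa6 w) & ~ Q_multiple_root w]
  | KIIIStar => vge v 1 (wa1 w) /\ [/\ vge v 2 (wa2 w), vge v 3 (wa3 w),
                    vge v 3 (wa4 w), vge v 5 (wa6 w) & ~ vge v 4 (wa4 w)]
  | KIIStar => vge v 1 (wa1 w) /\ [/\ vge v 2 (wa2 w), vge v 3 (wa3 w),
                   vge v 4 (wa4 w), vge v 5 (wa6 w) & ~ vge v 6 (wa6 w)]
  end.

(* E (given by w0) has Kodaira type T: Tate's algorithm, run on some integral
   model of E (with trivial coordinate changes), terminates at type T *)
Definition kodaira_type w0 (T : additive_kodaira) : Prop :=
  exists w, [/\ wiso w0 w, integral_model w & tate_cond T w].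

Definition vq (a : K) (i : nat) : rat := (v a)%:~R / i%:R.

(* m = min_{i in {1,2,3,4,6}} v(a_i)/i equals q (v(0) = +oo) *)
Definition m_is w (q : rat) : Prop :=
  let L := [:: (wa1 w, 1%N); (wa2 w, 2%N); (wa3 w, 3%N); (wa4 w, 4%N); (wa6 w, 6%N)] in
  (forall p, p \in L -> p.1 = 0 \/ q <= vq p.1 p.2) /\
  (exists p, p \in L /\ p.1 <> 0 /\ vq p.1 p.2 = q).

Definition paper_cond (T : additive_kodaira) w : Prop :=
  match T with
  | KII => m_is w (1%:Q / 6%:Q)
  | KIII => m_is w (1%:Q / 4%:Q)
  | KIV => m_is w (1%:Q / 3%:Q) /\ vexact v 2 (wb6 w)
  | KI0Star => m_is w (1%:Q / 2%:Q) /\ vexact v 6 (wdelta w)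
  | KInStar_pos => [/\ m_is w (1%:Q / 2%:Q), vge v 7 (wdelta w)
                     & vexact v 2 (wa2 w ^+ 2 - 3%:R * wa4 w)]
  | KIVStar => m_is w (2%:Q / 3%:Q) /\ vexact v 4 (wb6 w)
  | KIIIStar => m_is w (3%:Q / 4%:Q)
  | KIIStar => m_is w (5%:Q / 6%:Q)
  end.

End Weierstrass.

From HB Require Import structures.
From mathcomp Require Import all_boot all_order all_algebra.
From mathcomp Require Import zify ring lra.
From Stdlib Require Import Classical.
Set Implicit Arguments. Unset Strict Implicit. Unset Printing Implicit Defensive.
Import Order.TTheory GRing.Theory Num.Theory.
Local Open Scope ring_scope.

(* Each of the eight conditions says that the model is in the normal form at
   which Tate's algorithm stops with the corresponding type: lower bounds
   v(a_i) >= k_i, where k_i is the ceiling of i m, together with one exactness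
   condition (on a6, a4, b6, the discriminant of the cubic, or its invariant
   a2^2 - 3a4).  The key fact is that no change of variables with integral
   r, s, t moves such a model into the bounds of the next step of the algorithm.
   Since scaling by any u with v(u) > 0 moves every integral model into those
   bounds, a normal form is minimal; two normal forms of one curve are then
   related by a unit u, which forces their types to agree.  Over a perfect
   residue field the algorithm turns any model on which it stops into a normal
   form of the same type (taking square and cube roots and double roots of
   cubics mod pi), and a normal form satisfies the stopping condition of its
   type. *)

(** * Thresholds for m *)

Definition is_ceil (x : rat) (k : int) : Prop := (k - 1)%:~R < x /\ x <= k%:~R.

Lemma is_ceil_le_div (q : rat) (i : nat) (k z : int) : (0 < i)%N ->
  is_ceil (q * i%:R) k -> (q <= z%:~R / i%:R <-> k <= z).
Proof.
move=> i_gt0 [lt_k le_k]; rewrite ler_pdivlMr ?ltr0n //; split => [le_z|le_kz].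
  rewrite leNgt; apply/negP => lt_zk.
  have : z%:~R <= (k - 1)%:~R :> rat by rewrite ler_int; lia.
  by move/le_lt_trans/(_ lt_k); rewrite ltNge le_z.
by apply: le_trans le_k _; rewrite ler_int.
Qed.

Lemma is_ceil_eq_div (q : rat) (i : nat) (k z : int) : (0 < i)%N ->
  is_ceil (q * i%:R) k -> (z%:~R / i%:R = q <-> q * i%:R = k%:~R /\ z = k).
Proof.
move=> i_gt0 hk; have i_neq0 : i%:R != 0 :> rat by rewrite pnatr_eq0 -lt0n.
split => [zq|[qk ->]]; last by rewrite -qk mulfK.
have le_kz : k <= z by rewrite -(is_ceil_le_div z i_gt0 hk) zq.
have ez : z%:~R = q * i%:R by rewrite -zq divfK.
have : z%:~R <= k%:~R :> rat by rewrite ez; case: hk.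
rewrite ler_int => le_zk; have ezk : z = k by lia.
by rewrite -ez ezk.
Qed.

(* [k_i] is the least valuation of a_i with v(a_i)/i >= q. *)
Definition ceil_multiples (q : rat) (k1 k2 k3 k4 k6 : int) : Prop :=
  [/\ is_ceil (q * 1%:R) k1, is_ceil (q * 2%:R) k2, is_ceil (q * 3%:R) k3,
      is_ceil (q * 4%:R) k4 & is_ceil (q * 6%:R) k6].

Ltac solve_ceil_multiples := rewrite /ceil_multiples /is_ceil; repeat split; lra.

Lemma ceil_multiples_1_6 : ceil_multiples (1%:Q / 6%:Q) 1 1 1 1 1.
Proof. solve_ceil_multiples. Qed.
Lemma ceil_multiples_1_4 : ceil_multiples (1%:Q / 4%:Q) 1 1 1 1 2.
Proof. solve_ceil_multiples. Qed.
Lemma ceil_multiples_1_3 : ceil_multiples (1%:Q / 3%:Q) 1 1 1 2 2.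
Proof. solve_ceil_multiples. Qed.
Lemma ceil_multiples_1_2 : ceil_multiples (1%:Q / 2%:Q) 1 1 2 2 3.
Proof. solve_ceil_multiples. Qed.
Lemma ceil_multiples_2_3 : ceil_multiples (2%:Q / 3%:Q) 1 2 2 3 4.
Proof. solve_ceil_multiples. Qed.
Lemma ceil_multiples_3_4 : ceil_multiples (3%:Q / 4%:Q) 1 2 3 3 5.
Proof. solve_ceil_multiples. Qed.
Lemma ceil_multiples_5_6 : ceil_multiples (5%:Q / 6%:Q) 1 2 3 4 5.
Proof. solve_ceil_multiples. Qed.

(** * Changes of variables *)

Section ChangeOfVariables.
Variable K : fieldType.
Implicit Types (w : wcoef K) (u r s t : K).

Definition wshift w r s t : wcoef K :=
  WCoef (wa1 w + 2%:R * s)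
        (wa2 w - s * wa1 w + 3%:R * r - s ^+ 2)
        (wa3 w + r * wa1 w + 2%:R * t)
        (wa4 w - s * wa3 w + 2%:R * r * wa2 w - (t + r * s) * wa1 w
           + 3%:R * r ^+ 2 - 2%:R * s * t)
        (wa6 w + r * wa4 w + r ^+ 2 * wa2 w + r ^+ 3 - t * wa3 w - t ^+ 2
           - r * t * wa1 w).

Definition wscale u w : wcoef K :=
  WCoef (wa1 w / u) (wa2 w / u ^+ 2) (wa3 w / u ^+ 3) (wa4 w / u ^+ 4) (wa6 w / u ^+ 6).

Definition wiso_by w w' u r s t : Prop := u != 0 /\ w' = wscale u (wshift w r s t).

Lemma wisoE w w' : wiso w w' <-> exists u r s t, wiso_by w w' u r s t.
Proof.
split.
  case=> u [r [s [t [u0 [h1 h2 h3 h4 h6]]]]]; exists u, r, s, t.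
  have u_neq0 : u != 0 by apply/eqP.
  split => //; case: w' h1 h2 h3 h4 h6 => b1 b2 b3 b4 b6 /= h1 h2 h3 h4 h6.
  rewrite /wscale /= -h1 -h2 -h3 -h4 -h6; congr WCoef; field; rewrite ?expf_neq0 //.
case=> u [r [s [t [u_neq0 ->]]]]; exists u, r, s, t; split; first exact/eqP.
by rewrite /wscale /=; split; field; rewrite ?expf_neq0.
Qed.

Lemma wiso_by_shift w r s t : wiso_by w (wshift w r s t) 1 r s t.
Proof.
split; first exact: oner_neq0.
by case: (wshift w r s t) => *; rewrite /wscale /= !expr1n !divr1.
Qed.

Lemma wiso_by_refl w : wiso_by w w 1 0 0 0.
Proof.
split; first exact: oner_neq0.
case: w => a1 a2 a3 a4 a6; rewrite /wscale /wshift /= !expr1n !divr1; congr WCoef; ring.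
Qed.

Lemma wiso_byV w w' u r s t : wiso_by w w' u r s t ->
  wiso_by w' w u^-1 (- r / u ^+ 2) (- s / u) ((r * s - t) / u ^+ 3).
Proof.
case=> u_neq0 ->; split; first by rewrite invr_eq0.
case: w => a1 a2 a3 a4 a6; rewrite /wscale /wshift /=; congr WCoef; field.
all: by rewrite ?u_neq0 ?oner_neq0.
Qed.

Lemma wiso_by_trans w w' w'' u r s t u' r' s' t' :
  wiso_by w w' u r s t -> wiso_by w' w'' u' r' s' t' ->
  wiso_by w w'' (u * u') (r + u ^+ 2 * r') (s + u * s') (t + u ^+ 3 * t' + s * u ^+ 2 * r').
Proof.
case=> u_neq0 -> [u'_neq0 ->]; split; first by rewrite mulf_neq0.
case: w => a1 a2 a3 a4 a6; rewrite /wscale /wshift /=; congr WCoef; field.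
all: by rewrite ?u_neq0 ?u'_neq0 ?oner_neq0 ?mulf_neq0.
Qed.

Lemma wdisc_wiso_by w w' u r s t : wiso_by w w' u r s t -> wdisc w = u ^+ 12 * wdisc w'.
Proof.
case=> u_neq0 ->; case: w => a1 a2 a3 a4 a6.
rewrite /wdisc /wb2 /wb4 /wb6 /wb8 /wscale /wshift /=; field; rewrite ?expf_neq0 //.
Qed.

Lemma wdisc_wiso_by_neq0 w w' u r s t : wiso_by w w' u r s t -> wdisc w != 0 -> wdisc w' != 0.
Proof. by move=> h; rewrite (wdisc_wiso_by h) mulf_eq0 negb_or => /andP[]. Qed.

Lemma wshift_wiso_by w w' u r s t : wiso_by w w' u r s t ->
  wshift w r s t = WCoef (u * wa1 w') (u ^+ 2 * wa2 w') (u ^+ 3 * wa3 w')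
                         (u ^+ 4 * wa4 w') (u ^+ 6 * wa6 w').
Proof.
case=> u_neq0 ->; case: (wshift w r s t) => b1 b2 b3 b4 b6 /=.
by congr WCoef; rewrite mulrC divfK ?expf_neq0.
Qed.

Lemma disc_cubic_scale u b c d :
  disc_cubic (u ^+ 2 * b) (u ^+ 4 * c) (u ^+ 6 * d) = u ^+ 12 * disc_cubic b c d.
Proof. rewrite /disc_cubic; ring. Qed.

End ChangeOfVariables.

(** * Valuations *)

Section Valuation.
Variables (K : fieldType) (v : K -> int).
Hypothesis Hv : normalized_discrete_valuation v.
Implicit Types (w : wcoef K) (x y c u r s t : K) (m n k : int).

Lemma valM x y : x != 0 -> y != 0 -> v (x * y) = v x + v y.
Proof. by case: Hv => H _ _ hx hy; apply: H; apply/eqP. Qed.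

Lemma val1 : v 1 = 0.
Proof. have : v 1 = v 1 + v 1 by rewrite -valM ?oner_neq0 // mulr1. lia. Qed.

Lemma valN x : v (- x) = v x.
Proof.
have N1_neq0 : (-1 : K) != 0 by rewrite oppr_eq0 oner_neq0.
have : v 1 = v (-1) + v (-1) by rewrite -valM // mulrNN mulr1.
rewrite val1 => vN1; have [->|x_neq0] := eqVneq x 0; first by rewrite oppr0.
rewrite -mulN1r valM //; lia.
Qed.

Lemma valX x (n : nat) : x != 0 -> v (x ^+ n) = v x * n%:Z.
Proof.
move=> x_neq0; elim: n => [|n IH]; first by rewrite expr0 val1 mulr0.
rewrite exprS valM ?expf_neq0 // IH; lia.
Qed.

Lemma val_unit_scale u x : u != 0 -> x != 0 -> v (u ^+ 12 * x) = 12 * v u + v x.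
Proof. by move=> u_neq0 x_neq0; rewrite valM ?expf_neq0 // valX //; lia. Qed.

Lemma vgeW m n x : m <= n -> vge v n x -> vge v m x.
Proof. by move=> le_mn [->|h]; [left | right; lia]. Qed.

Lemma vgeD n x y : vge v n x -> vge v n y -> vge v n (x + y).
Proof.
case=> [->|hx]; first by rewrite add0r.
case=> [->|hy]; first by rewrite addr0; right.
have [xy0|xy_neq0] := eqVneq (x + y) 0; first by left.
have [->|x_neq0] := eqVneq x 0; first by rewrite add0r; right.
have [->|y_neq0] := eqVneq y 0; first by rewrite addr0; right.
right; case: Hv => _ ultra _.
apply: le_trans (ultra x y _ _ _); [by rewrite le_min hx hy | exact/eqP ..].
Qed.

Lemma vgeN n x : vge v n x -> vge v n (- x).
Proof. by case=> [->|h]; [rewrite oppr0; left | right; rewrite valN]. Qed.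

Lemma vgeM m n x y : vge v m x -> vge v n y -> vge v (m + n) (x * y).
Proof.
case=> [->|hx]; first by rewrite mul0r; left.
case=> [->|hy]; first by rewrite mulr0; left.
have [->|x_neq0] := eqVneq x 0; first by rewrite mul0r; left.
have [->|y_neq0] := eqVneq y 0; first by rewrite mulr0; left.
right; rewrite valM //; lia.
Qed.

Lemma vgeD_min m n x y : vge v m x -> vge v n y -> vge v (Order.min m n) (x + y).
Proof.
by move=> hx hy; apply: vgeD; apply: vgeW (hx) || apply: vgeW (hy);
  rewrite ge_min lexx ?orbT.
Qed.

Lemma vge0_1 : vge v 0 1.
Proof. by right; rewrite val1. Qed.

Lemma vge0_nat (n : nat) : vge v 0 n%:R.
Proof. by elim: n => [|n IH]; [left | rewrite mulrS; apply: vgeD => //; apply: vge0_1]. Qed.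

Lemma vgeX n x (k : nat) : vge v n x -> vge v (n * k%:Z) (x ^+ k).
Proof.
move=> hx; elim: k => [|k IH]; first by rewrite expr0 mulr0; apply: vge0_1.
rewrite exprS (_ : n * k.+1%:Z = n + n * k%:Z); last by lia.
exact: vgeM.
Qed.

Lemma vge_root k m x (n : nat) : (0 < n)%N -> (m - 1) * n%:Z < k ->
  vge v k (x ^+ n) -> vge v m x.
Proof.
move=> n_gt0 lt_k [xn0|h].
  by left; apply/eqP; move: (expf_eq0 x n); rewrite xn0 eqxx n_gt0.
have [->|x_neq0] := eqVneq x 0; first by left.
by right; rewrite valX // in h; nia.
Qed.

Lemma vexact_gt n m x : vexact v n x -> n < m -> ~ vge v m x.
Proof. by case=> x_neq0 vx lt_nm [/x_neq0|] //; lia. Qed.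

Lemma vexactP n x : vge v n x -> ~ vge v (n + 1) x -> vexact v n x.
Proof.
case=> [x0|h] hn; first by case: hn; left.
split; first by move=> x0; apply: hn; left.
have : ~ (n + 1 <= v x) by move=> h'; apply: hn; right.
lia.
Qed.

Lemma vge_split n x : vge v n x -> vexact v n x \/ vge v (n + 1) x.
Proof. by move=> hx; case: (classic (vge v (n + 1) x)); [right | left; apply: vexactP]. Qed.

Lemma not_vge1_1 : ~ vge v 1 1.
Proof. by rewrite /vge val1 => -[/eqP|]; rewrite ?oner_eq0. Qed.

Lemma val_unit c : vge v 0 c -> ~ vge v 1 c -> v c = 0.
Proof.
move=> [c0|h] hc; first by case: hc; left.
have : ~ (1 <= v c) by move=> h'; apply: hc; right.
lia.
Qed.

Lemma unit_neq0 c : ~ vge v 1 c -> c != 0.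
Proof. by move=> hc; apply/eqP => c0; apply: hc; left. Qed.

Lemma vge_unitMl n c x : vge v 0 c -> ~ vge v 1 c -> vge v n (c * x) -> vge v n x.
Proof.
move=> c0 c1 [|h].
  by move/eqP; rewrite mulf_eq0 (negbTE (unit_neq0 c1)) => /eqP; left.
have [->|x_neq0] := eqVneq x 0; first by left.
by right; move: h; rewrite valM ?(unit_neq0 c1) // (val_unit c0 c1) add0r.
Qed.

Lemma vge_unitXMl n c x (k : nat) : vge v 0 c -> ~ vge v 1 c ->
  vge v n (c ^+ k * x) -> vge v n x.
Proof.
move=> c0 c1; elim: k x => [|k IH] x; first by rewrite expr0 mul1r.
by rewrite exprS -mulrA => /(vge_unitMl c0 c1)/IH.
Qed.

Lemma vge0_unitV c : vge v 0 c -> ~ vge v 1 c -> vge v 0 c^-1.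
Proof.
move=> c0 c1; right; have c_neq0 := unit_neq0 c1.
have : v (c * c^-1) = v c + v c^-1 by rewrite valM // invr_eq0.
rewrite mulfV // val1 val_unit //; lia.
Qed.

Lemma unitM c d : vge v 0 c -> ~ vge v 1 c -> vge v 0 d -> ~ vge v 1 d ->
  ~ vge v 1 (c * d).
Proof.
move=> c0 c1 d0 d1 cd1; apply: d1.
have := vgeM (vge0_unitV c0 c1) cd1.
by rewrite add0r mulrA mulVf ?unit_neq0 // mul1r.
Qed.

Lemma unit2_of_char3 : vge v 1 (3%:R : K) -> ~ vge v 1 (2%:R : K).
Proof.
move=> h3 h2; apply: not_vge1_1.
have -> : (1 : K) = 3%:R - 2%:R by rewrite -natrB.
exact: vgeD h3 (vgeN h2).
Qed.

Ltac vhyp := multimatch goal with H : vge _ _ ?x |- vge _ _ ?x => exact H end.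

Ltac vterm := vhyp + lazymatch goal with
 | |- vge _ _ (_ * _) => eapply vgeM; [vterm | vterm]
 | |- vge _ _ (_ ^+ _) => eapply vgeX; vterm
 | |- vge _ _ (- _) => eapply vgeN; vterm
 | |- vge _ _ (_ + _) => eapply vgeD_min; [vterm | vterm]
 | |- vge _ _ (_%:R) => apply: vge0_nat
 | |- vge _ _ 1 => apply: vge0_1
 end.

(* Bounds the valuation of a polynomial expression from the bounds in the
   context: top-level sums are split, each summand is estimated monomial by
   monomial. *)
Ltac vsolve := first
 [ eapply vgeW; [ | vhyp ]; lia
 | lazymatch goal with
   | |- vge _ _ (_ + _) => apply: vgeD; vsolve
   | |- vge _ _ (- _) => apply: vgeN; vsolve
   | _ => eapply vgeW; [ | vterm ]; lia
   end ].

(* [vroot m n k] reduces [vge v m x] to [vge v k (x ^+ n)]. *)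
Ltac vroot m n k := apply: (@vge_root (k%:Z) (m%:Z) _ n); [done | lia | ].

(** * Integral changes of variables *)

(* R is integrally closed: a root of a monic polynomial over R lies in R. *)
Lemma vge0_root_monic x y (n : nat) : x ^+ n.+1 = y ->
  (x != 0 -> v x < 0 -> vge v (v x * n%:Z) y) -> vge v 0 x.
Proof.
move=> exy hy; apply: NNPP => x0.
have x_neq0 : x != 0 by apply/eqP => x0'; apply: x0; left.
have vx_lt0 : v x < 0 by apply: contra_notT x0; rewrite -leNgt => ?; right.
case: (hy x_neq0 vx_lt0) => [y0|].
  by move: (expf_eq0 x n.+1); rewrite exy y0 eqxx (negbTE x_neq0).
by rewrite -exy valX //; lia.
Qed.

Definition wbounds (k : int * int * int * int * int) (w : wcoef K) : Prop :=
  let: (k1, k2, k3, k4, k6) := k in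
  [/\ vge v k1 (wa1 w), vge v k2 (wa2 w), vge v k3 (wa3 w), vge v k4 (wa4 w)
    & vge v k6 (wa6 w)].

Lemma wbounds_le (k1 k2 k3 k4 k6 l1 l2 l3 l4 l6 : int) w :
  wbounds (l1, l2, l3, l4, l6) w ->
  (k1 <= l1) && (k2 <= l2) && (k3 <= l3) && (k4 <= l4) && (k6 <= l6) ->
  wbounds (k1, k2, k3, k4, k6) w.
Proof.
move=> [] ? ? ? ? ? /andP[/andP[/andP[/andP[? ?] ?] ?] ?].
by split; apply: vgeW; eassumption.
Qed.
(* With this hint, the target bounds in [wbounds_le hw isT] are read off the
   expected type before [isT] is checked. *)
Arguments wbounds_le {k1 k2 k3 k4 k6 l1 l2 l3 l4 l6 w} & _ _.

Lemma wbounds_scale (c k1 k2 k3 k4 k6 : int) u (w : wcoef K) : vge v c u ->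
  wbounds (k1, k2, k3, k4, k6) w ->
  wbounds (c + k1, c * 2%:Z + k2, c * 3%:Z + k3, c * 4%:Z + k4, c * 6%:Z + k6)
    (WCoef (u * wa1 w) (u ^+ 2 * wa2 w) (u ^+ 3 * wa3 w) (u ^+ 4 * wa4 w) (u ^+ 6 * wa6 w)).
Proof. by move=> hu [] *; split => /=; apply: vgeM => //; apply: vgeX. Qed.

Notation integral := (wbounds (0, 0, 0, 0, 0)).

Lemma integralE w : integral w <-> integral_model v w.
Proof. by case: w => a1 a2 a3 a4 a6; split; case; split. Qed.

(* 4r and 3r are roots of monic polynomials over R, obtained by comparing b6,
   resp. b8, of the two models; so r = 4r - 3r is integral. *)
Lemma wshift_integral_r w r s t : integral w -> integral (wshift w r s t) -> vge v 0 r.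
Proof.
case: w => a1 a2 a3 a4 a6 [] /= h1 h2 h3 h4 h6 [] /=.
set A1 := a1 + _; set A2 := a2 - _ + _ - _; set A3 := a3 + _ + _.
set A4 := a4 - _ + _ - _ + _ - _; set A6 := a6 + _ + _ + _ - _ - _ - _.
move=> hA1 hA2 hA3 hA4 hA6.
have h4r : vge v 0 (4%:R * r).
  apply: (@vge0_root_monic _ (- ((a1 ^+ 2 + 4%:R * a2) * (4%:R * r) ^+ 2
      + 8%:R * (2%:R * a4 + a1 * a3) * (4%:R * r)
      + 16%:R * (a3 ^+ 2 + 4%:R * a6 - (A3 ^+ 2 + 4%:R * A6)))) 2).
    by rewrite /A3 /A6; ring.
  move=> _ vx_lt0; have hx : vge v (v (4%:R * r)) (4%:R * r) by right.
  vsolve.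
have h3r : vge v 0 (3%:R * r).
  apply: (@vge0_root_monic _ (- ((a1 ^+ 2 + 4%:R * a2) * (3%:R * r) ^+ 3
      + 9%:R * (2%:R * a4 + a1 * a3) * (3%:R * r) ^+ 2
      + 27%:R * (a3 ^+ 2 + 4%:R * a6) * (3%:R * r)
      + 27%:R * ((a1 ^+ 2 * a6 + 4%:R * a2 * a6 - a1 * a3 * a4 + a2 * a3 ^+ 2 - a4 ^+ 2)
         - (A1 ^+ 2 * A6 + 4%:R * A2 * A6 - A1 * A3 * A4 + A2 * A3 ^+ 2 - A4 ^+ 2)))) 3).
    by rewrite /A1 /A2 /A3 /A4 /A6; ring.
  move=> _ vx_lt0; have hx : vge v (v (3%:R * r)) (3%:R * r) by right.
  vsolve.
by rewrite (_ : r = 4%:R * r - 3%:R * r); [vsolve | ring].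
Qed.

Lemma wshift_integral w r s t : integral w -> integral (wshift w r s t) ->
  [/\ vge v 0 r, vge v 0 s & vge v 0 t].
Proof.
move=> hw hw'; have hr := wshift_integral_r hw hw'.
move: hw hw'; case: w => a1 a2 a3 a4 a6 [] /= h1 h2 h3 h4 h6 [] /= _ hA2 _ _ hA6.
have hs : vge v 0 s.
  apply: (@vge0_root_monic _ (- (a1 * s)
    + (a2 + 3%:R * r - (a2 - s * a1 + 3%:R * r - s ^+ 2))) 1); first by ring.
  move=> _ vx_lt0; have hx : vge v (v s) s by right.
  vsolve.
split => //; apply: (@vge0_root_monic _ (- ((a3 + r * a1) * t)
  + ((a6 + r * a4 + r ^+ 2 * a2 + r ^+ 3)
     - (a6 + r * a4 + r ^+ 2 * a2 + r ^+ 3 - t * a3 - t ^+ 2 - r * t * a1))) 1).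
  by ring.
move=> _ vx_lt0; have hx : vge v (v t) t by right.
vsolve.
Qed.

Lemma wiso_by_integral w w' u r s t : wiso_by w w' u r s t -> vge v 0 u ->
  integral w -> integral w' -> [/\ vge v 0 r, vge v 0 s & vge v 0 t].
Proof.
move=> hiso hu hw hw'; apply: wshift_integral hw _.
by rewrite (wshift_wiso_by hiso); apply: wbounds_le (wbounds_scale hu hw') _.
Qed.

Lemma wshift_max_ideal w r s t : wbounds (1, 1, 1, 1, 1) w ->
  vge v 0 r -> vge v 0 s -> vge v 0 t -> wbounds (1, 1, 1, 1, 1) (wshift w r s t) ->
  [/\ vge v 1 r, vge v 1 s & vge v 1 t].
Proof.
case: w => a1 a2 a3 a4 a6 [] /= h1 h2 h3 h4 h6 hr hs ht [] /= H1 H2 H3 H4 H6.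
have h2t : vge v 1 (2%:R * t).
  by rewrite (_ : 2%:R * t = (a3 + r * a1 + 2%:R * t) - a3 - r * a1); [vsolve | ring].
have hrt : vge v 1 (r ^+ 3 - t ^+ 2).
  rewrite (_ : r ^+ 3 - t ^+ 2 = (a6 + r * a4 + r ^+ 2 * a2 + r ^+ 3 - t * a3 - t ^+ 2
     - r * t * a1) - a6 - r * a4 - r ^+ 2 * a2 + t * a3 + r * t * a1); [vsolve | ring].
have [r1 t1] : vge v 1 r /\ vge v 1 t.
  have [c3|c3] := classic (vge v 1 (3%:R : K)).
    have t1 : vge v 1 t by apply: vge_unitMl (vge0_nat 2) (unit2_of_char3 c3) h2t.
    split => //; vroot 1%N 3%N 1%N.
    by rewrite (_ : r ^+ 3 = (r ^+ 3 - t ^+ 2) + t ^+ 2); [vsolve | ring].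
  have h3r : vge v 1 (3%:R * r ^+ 2).
    rewrite (_ : 3%:R * r ^+ 2 = (a4 - s * a3 + 2%:R * r * a2 - (t + r * s) * a1
       + 3%:R * r ^+ 2 - 2%:R * s * t) - a4 + s * a3 - 2%:R * r * a2 + t * a1
       + r * s * a1 + s * (2%:R * t)); [vsolve | ring].
  have r1 : vge v 1 r by vroot 1%N 2%N 1%N; apply: vge_unitMl (vge0_nat 3) c3 h3r.
  split => //; vroot 1%N 2%N 1%N.
  by rewrite (_ : t ^+ 2 = r ^+ 3 - (r ^+ 3 - t ^+ 2)); [vsolve | ring].
split => //; vroot 1%N 2%N 1%N.
rewrite (_ : s ^+ 2 = a2 - s * a1 + 3%:R * r - (a2 - s * a1 + 3%:R * r - s ^+ 2));
  [vsolve | ring].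
Qed.

Lemma shift_t_sq m n (a1 a2 a3 a4 a6 r t : K) :
  vge v m (a6 + r * a4 + r ^+ 2 * a2 + r ^+ 3 - t * a3 - t ^+ 2 - r * t * a1) -> n <= m ->
  vge v n (a6 + r * a4 + r ^+ 2 * a2 + r ^+ 3 - t * a3 - r * t * a1) -> vge v n (t ^+ 2).
Proof.
move=> hA6 le_nm hX; rewrite (_ : t ^+ 2 = (a6 + r * a4 + r ^+ 2 * a2 + r ^+ 3 - t * a3
  - r * t * a1) - (a6 + r * a4 + r ^+ 2 * a2 + r ^+ 3 - t * a3 - t ^+ 2 - r * t * a1));
  [vsolve | ring].
Qed.

Lemma wshift_r_ge2 w r s t : wbounds (1, 2, 2, 3, 4) w ->
  vge v 1 r -> vge v 1 s -> vge v 1 t -> wbounds (1, 2, 2, 3, 4) (wshift w r s t) ->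
  vge v 2 r.
Proof.
case: w => a1 a2 a3 a4 a6 [] /= h1 h2 h3 h4 h6 hr hs ht [] /= _ H2 H3 _ H6.
have [c3|c3] := classic (vge v 1 (3%:R : K)).
  have t2 : vge v 2 t.
    apply: vge_unitMl (vge0_nat 2) (unit2_of_char3 c3) _.
    by rewrite (_ : 2%:R * t = (a3 + r * a1 + 2%:R * t) - a3 - r * a1); [vsolve | ring].
  vroot 2%N 3%N 4%N.
  rewrite (_ : r ^+ 3 = (a6 + r * a4 + r ^+ 2 * a2 + r ^+ 3 - t * a3 - t ^+ 2 - r * t * a1)
      - a6 - r * a4 - r ^+ 2 * a2 + t * a3 + t ^+ 2 + r * t * a1); [vsolve | ring].
apply: vge_unitMl (vge0_nat 3) c3 _.
by rewrite (_ : 3%:R * r = (a2 - s * a1 + 3%:R * r - s ^+ 2) - a2 + s * a1 + s ^+ 2);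
  [vsolve | ring].
Qed.

Lemma disc_cubic_perturb b c d e f g :
  vge v 1 b -> vge v 2 c -> vge v 3 d -> vge v 2 e -> vge v 3 f -> vge v 4 g ->
  vge v 7 (disc_cubic (b + e) (c + f) (d + g) - disc_cubic b c d).
Proof.
move=> *; rewrite (_ : disc_cubic (b + e) (c + f) (d + g) - disc_cubic b c d =
  (b ^+ 2 * (2%:R * c * f + f ^+ 2) + (2%:R * b * e + e ^+ 2) * (c + f) ^+ 2)
  - 4%:R * (3%:R * c ^+ 2 * f + 3%:R * c * f ^+ 2 + f ^+ 3)
  - 4%:R * ((3%:R * b ^+ 2 * e + 3%:R * b * e ^+ 2 + e ^+ 3) * (d + g) + b ^+ 3 * g)
  - 27%:R * (2%:R * d * g + g ^+ 2)
  + 18%:R * (e * (c + f) * (d + g) + b * f * (d + g) + b * c * g)).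
  by vsolve.
by rewrite /disc_cubic; ring.
Qed.

(* Each proof writes the exact quantity of w in terms of the coefficients of
   the shifted model and of r, s, t, which are then forced deep enough into
   the maximal ideal. *)
Section NoShiftToNextStep.
Variables (w : wcoef K) (r s t : K).
Hypotheses (hr : vge v 0 r) (hs : vge v 0 s) (ht : vge v 0 t).

Lemma no_shift_from_II : wbounds (1, 1, 1, 1, 1) w -> vexact v 1 (wa6 w) ->
  ~ wbounds (1, 1, 1, 1, 2) (wshift w r s t).
Proof.
move=> hw he hw'.
have [r1 s1 t1] := wshift_max_ideal hw hr hs ht (wbounds_le hw' isT).
move: hw he hw'; case: w => a1 a2 a3 a4 a6 [] /= h1 h2 h3 h4 h6 he [] /= H1 H2 H3 H4 H6.
apply: (vexact_gt he (isT : 1 < 2 :> int)).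
rewrite (_ : a6 = (a6 + r * a4 + r ^+ 2 * a2 + r ^+ 3 - t * a3 - t ^+ 2 - r * t * a1)
   - r * a4 - r ^+ 2 * a2 - r ^+ 3 + t * a3 + t ^+ 2 + r * t * a1); [vsolve | ring].
Qed.

Lemma no_shift_from_III : wbounds (1, 1, 1, 1, 2) w -> vexact v 1 (wa4 w) ->
  ~ wbounds (1, 1, 1, 2, 2) (wshift w r s t).
Proof.
move=> hw he hw'.
have [r1 s1 t1] := wshift_max_ideal (wbounds_le hw isT) hr hs ht (wbounds_le hw' isT).
move: hw he hw'; case: w => a1 a2 a3 a4 a6 [] /= h1 h2 h3 h4 h6 he [] /= H1 H2 H3 H4 H6.
apply: (vexact_gt he (isT : 1 < 2 :> int)).
rewrite (_ : a4 = (a4 - s * a3 + 2%:R * r * a2 - (t + r * s) * a1 + 3%:R * r ^+ 2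
   - 2%:R * s * t) + s * a3 - 2%:R * r * a2 + t * a1 + r * s * a1 - 3%:R * r ^+ 2
   + 2%:R * s * t); [vsolve | ring].
Qed.

Lemma no_shift_from_IV : wbounds (1, 1, 1, 2, 2) w -> vexact v 2 (wb6 w) ->
  ~ wbounds (1, 1, 2, 2, 3) (wshift w r s t).
Proof.
move=> hw he hw'.
have [r1 s1 t1] := wshift_max_ideal (wbounds_le hw isT) hr hs ht (wbounds_le hw' isT).
move: hw he hw'; case: w => a1 a2 a3 a4 a6 [] /= h1 h2 h3 h4 h6 he [] /= H1 H2 H3 H4 H6.
apply: (vexact_gt he (isT : 2 < 3 :> int)); rewrite /wb6 /=.
rewrite (_ : a3 ^+ 2 + 4%:R * a6 = (a3 + r * a1 + 2%:R * t) ^+ 2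
   + 4%:R * (a6 + r * a4 + r ^+ 2 * a2 + r ^+ 3 - t * a3 - t ^+ 2 - r * t * a1)
   - 4%:R * r * a4 - 2%:R * r * a1 * a3 - r ^+ 2 * a1 ^+ 2 - 4%:R * r ^+ 2 * a2
   - 4%:R * r ^+ 3); [vsolve | ring].
Qed.

Lemma no_shift_from_I0s : wbounds (1, 1, 2, 2, 3) w -> vexact v 6 (wdelta w) ->
  ~ wbounds (1, 2, 2, 3, 4) (wshift w r s t).
Proof.
move=> hw he hw'.
have [r1 s1 t1] := wshift_max_ideal (wbounds_le hw isT) hr hs ht (wbounds_le hw' isT).
move: hw he hw'; case: w => a1 a2 a3 a4 a6 [] /= h1 h2 h3 h4 h6 he [] /= H1 H2 H3 H4 H6.
have t2 : vge v 2 t by vroot 2%N 2%N 3%N; apply: (shift_t_sq H6) => //; vsolve.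
have hB2 : vge v 2 (a2 + 3%:R * r).
  by rewrite (_ : a2 + 3%:R * r = (a2 - s * a1 + 3%:R * r - s ^+ 2) + s * a1 + s ^+ 2);
    [vsolve | ring].
have hB4 : vge v 3 (a4 + 2%:R * r * a2 + 3%:R * r ^+ 2).
  rewrite (_ : a4 + 2%:R * r * a2 + 3%:R * r ^+ 2 = (a4 - s * a3 + 2%:R * r * a2
    - (t + r * s) * a1 + 3%:R * r ^+ 2 - 2%:R * s * t) + s * a3 + t * a1 + r * s * a1
    + 2%:R * s * t); [vsolve | ring].
have hB6 : vge v 4 (a6 + r * a4 + r ^+ 2 * a2 + r ^+ 3).
  rewrite (_ : a6 + r * a4 + r ^+ 2 * a2 + r ^+ 3 = (a6 + r * a4 + r ^+ 2 * a2 + r ^+ 3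
    - t * a3 - t ^+ 2 - r * t * a1) + t * a3 + t ^+ 2 + r * t * a1); [vsolve | ring].
apply: (vexact_gt he (isT : 6 < 7 :> int)); rewrite /wdelta /=.
rewrite (_ : disc_cubic a2 a4 a6 = disc_cubic (a2 + 3%:R * r)
  (a4 + 2%:R * r * a2 + 3%:R * r ^+ 2) (a6 + r * a4 + r ^+ 2 * a2 + r ^+ 3));
  last by rewrite /disc_cubic; ring.
rewrite /disc_cubic; vsolve.
Qed.

Lemma no_shift_from_Ins : wbounds (1, 1, 2, 2, 3) w ->
  vexact v 2 (wa2 w ^+ 2 - 3%:R * wa4 w) -> ~ wbounds (1, 2, 2, 3, 4) (wshift w r s t).
Proof.
move=> hw he hw'.
have [r1 s1 t1] := wshift_max_ideal (wbounds_le hw isT) hr hs ht (wbounds_le hw' isT).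
move: hw he hw'; case: w => a1 a2 a3 a4 a6 [] /= h1 h2 h3 h4 h6 he [] /= H1 H2 H3 H4 H6.
have t2 : vge v 2 t by vroot 2%N 2%N 3%N; apply: (shift_t_sq H6) => //; vsolve.
have hB2 : vge v 2 (a2 + 3%:R * r).
  by rewrite (_ : a2 + 3%:R * r = (a2 - s * a1 + 3%:R * r - s ^+ 2) + s * a1 + s ^+ 2);
    [vsolve | ring].
have hB4 : vge v 3 (a4 + 2%:R * r * a2 + 3%:R * r ^+ 2).
  rewrite (_ : a4 + 2%:R * r * a2 + 3%:R * r ^+ 2 = (a4 - s * a3 + 2%:R * r * a2
    - (t + r * s) * a1 + 3%:R * r ^+ 2 - 2%:R * s * t) + s * a3 + t * a1 + r * s * a1
    + 2%:R * s * t); [vsolve | ring].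
apply: (vexact_gt he (isT : 2 < 3 :> int)).
rewrite (_ : a2 ^+ 2 - 3%:R * a4 = (a2 + 3%:R * r) ^+ 2
  - 3%:R * (a4 + 2%:R * r * a2 + 3%:R * r ^+ 2)); [vsolve | ring].
Qed.

Lemma no_shift_from_IVs : wbounds (1, 2, 2, 3, 4) w -> vexact v 4 (wb6 w) ->
  ~ wbounds (1, 2, 3, 3, 5) (wshift w r s t).
Proof.
move=> hw he hw'.
have [r1 s1 t1] := wshift_max_ideal (wbounds_le hw isT) hr hs ht (wbounds_le hw' isT).
have r2 := wshift_r_ge2 hw r1 s1 t1 (wbounds_le hw' isT).
move: hw he hw'; case: w => a1 a2 a3 a4 a6 [] /= h1 h2 h3 h4 h6 he [] /= H1 H2 H3 H4 H6.
apply: (vexact_gt he (isT : 4 < 5 :> int)); rewrite /wb6 /=.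
rewrite (_ : a3 ^+ 2 + 4%:R * a6 = (a3 + r * a1 + 2%:R * t) ^+ 2
   + 4%:R * (a6 + r * a4 + r ^+ 2 * a2 + r ^+ 3 - t * a3 - t ^+ 2 - r * t * a1)
   - 4%:R * r * a4 - 2%:R * r * a1 * a3 - r ^+ 2 * a1 ^+ 2 - 4%:R * r ^+ 2 * a2
   - 4%:R * r ^+ 3); [vsolve | ring].
Qed.

Lemma no_shift_from_IIIs : wbounds (1, 2, 3, 3, 5) w -> vexact v 3 (wa4 w) ->
  ~ wbounds (1, 2, 3, 4, 5) (wshift w r s t).
Proof.
move=> hw he hw'.
have [r1 s1 t1] := wshift_max_ideal (wbounds_le hw isT) hr hs ht (wbounds_le hw' isT).
have r2 := wshift_r_ge2 (wbounds_le hw isT) r1 s1 t1 (wbounds_le hw' isT).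
move: hw he hw'; case: w => a1 a2 a3 a4 a6 [] /= h1 h2 h3 h4 h6 he [] /= H1 H2 H3 H4 H6.
have t2 : vge v 2 t by vroot 2%N 2%N 4%N; apply: (shift_t_sq H6) => //; vsolve.
have t3 : vge v 3 t by vroot 3%N 2%N 5%N; apply: (shift_t_sq H6) => //; vsolve.
apply: (vexact_gt he (isT : 3 < 4 :> int)).
rewrite (_ : a4 = (a4 - s * a3 + 2%:R * r * a2 - (t + r * s) * a1 + 3%:R * r ^+ 2
   - 2%:R * s * t) + s * a3 - 2%:R * r * a2 + t * a1 + r * s * a1 - 3%:R * r ^+ 2
   + 2%:R * s * t); [vsolve | ring].
Qed.

Lemma no_shift_from_IIs : wbounds (1, 2, 3, 4, 5) w -> vexact v 5 (wa6 w) ->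
  ~ wbounds (1, 2, 3, 4, 6) (wshift w r s t).
Proof.
move=> hw he hw'.
have [r1 s1 t1] := wshift_max_ideal (wbounds_le hw isT) hr hs ht (wbounds_le hw' isT).
have r2 := wshift_r_ge2 (wbounds_le hw isT) r1 s1 t1 (wbounds_le hw' isT).
move: hw he hw'; case: w => a1 a2 a3 a4 a6 [] /= h1 h2 h3 h4 h6 he [] /= H1 H2 H3 H4 H6.
have t2 : vge v 2 t by vroot 2%N 2%N 4%N; apply: (shift_t_sq H6) => //; vsolve.
have t3 : vge v 3 t by vroot 3%N 2%N 5%N; apply: (shift_t_sq H6) => //; vsolve.
apply: (vexact_gt he (isT : 5 < 6 :> int)).
rewrite (_ : a6 = (a6 + r * a4 + r ^+ 2 * a2 + r ^+ 3 - t * a3 - t ^+ 2 - r * t * a1)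
   - r * a4 - r ^+ 2 * a2 - r ^+ 3 + t * a3 + t ^+ 2 + r * t * a1); [vsolve | ring].
Qed.

Lemma no_shift_from_I0s_to_Ins : wbounds (1, 1, 2, 2, 3) w -> vexact v 6 (wdelta w) ->
  wbounds (1, 1, 2, 2, 3) (wshift w r s t) -> ~ vge v 7 (wdelta (wshift w r s t)).
Proof.
move=> hw he hw'.
have [r1 s1 t1] := wshift_max_ideal (wbounds_le hw isT) hr hs ht (wbounds_le hw' isT).
move: hw he hw'; case: w => a1 a2 a3 a4 a6 [] /= h1 h2 h3 h4 h6 he [] /= H1 H2 H3 H4 H6 hd.
have t2 : vge v 2 t by vroot 2%N 2%N 3%N; apply: (shift_t_sq H6) => //; vsolve.
have := @disc_cubic_perturb (a2 + 3%:R * r) (a4 + 2%:R * r * a2 + 3%:R * r ^+ 2)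
  (a6 + r * a4 + r ^+ 2 * a2 + r ^+ 3) (- (s * a1) - s ^+ 2)
  (- (s * a3) - t * a1 - r * s * a1 - 2%:R * s * t) (- (t * a3) - t ^+ 2 - r * t * a1).
have <- : disc_cubic a2 a4 a6 = disc_cubic (a2 + 3%:R * r)
  (a4 + 2%:R * r * a2 + 3%:R * r ^+ 2) (a6 + r * a4 + r ^+ 2 * a2 + r ^+ 3).
  by rewrite /disc_cubic; ring.
rewrite /wdelta /= in he hd *.
set D' := disc_cubic _ _ _ in hd; rewrite (_ : disc_cubic _ _ _ = D'); last first.
  by rewrite /D'; congr disc_cubic; ring.
move=> hD; apply: (vexact_gt he (isT : 6 < 7 :> int)).
rewrite (_ : disc_cubic a2 a4 a6 = D' - (D' - disc_cubic a2 a4 a6)); last by ring.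
by apply: vgeD (vgeN (hD _ _ _ _ _ _)); vsolve.
Qed.

End NoShiftToNextStep.

(** * Normal forms *)

Definition tate_rank (T : additive_kodaira) : nat :=
  match T with
  | KII => 0 | KIII => 1 | KIV => 2 | KI0Star | KInStar_pos => 3
  | KIVStar => 4 | KIIIStar => 5 | KIIStar => 6
  end.

(* [normal_bounds T] and [normal_exact T] describe the model on which Tate's
   algorithm stops with type T; [next_bounds T] are the bounds it would need to
   proceed to the next step. *)
Definition normal_bounds (T : additive_kodaira) : int * int * int * int * int :=
  match T with
  | KII => (1, 1, 1, 1, 1) | KIII => (1, 1, 1, 1, 2) | KIV => (1, 1, 1, 2, 2)
  | KI0Star | KInStar_pos => (1, 1, 2, 2, 3) | KIVStar => (1, 2, 2, 3, 4)
  | KIIIStar => (1, 2, 3, 3, 5) | KIIStar => (1, 2, 3, 4, 5)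
  end.

Definition next_bounds (T : additive_kodaira) : int * int * int * int * int :=
  match T with
  | KII => (1, 1, 1, 1, 2) | KIII => (1, 1, 1, 2, 2) | KIV => (1, 1, 2, 2, 3)
  | KI0Star | KInStar_pos => (1, 2, 2, 3, 4) | KIVStar => (1, 2, 3, 3, 5)
  | KIIIStar => (1, 2, 3, 4, 5) | KIIStar => (1, 2, 3, 4, 6)
  end.

Definition normal_exact (T : additive_kodaira) (w : wcoef K) : Prop :=
  match T with
  | KII => vexact v 1 (wa6 w)
  | KIII => vexact v 1 (wa4 w)
  | KIV => vexact v 2 (wb6 w)
  | KI0Star => vexact v 6 (wdelta w)
  | KInStar_pos => vge v 7 (wdelta w) /\ vexact v 2 (wa2 w ^+ 2 - 3%:R * wa4 w)
  | KIVStar => vexact v 4 (wb6 w)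
  | KIIIStar => vexact v 3 (wa4 w)
  | KIIStar => vexact v 5 (wa6 w)
  end.

Definition normal_form T w : Prop := wbounds (normal_bounds T) w /\ normal_exact T w.

Lemma normal_form_integral T w : normal_form T w -> integral w.
Proof. by case: T => -[hw _]; apply: wbounds_le hw _. Qed.

Lemma no_shift_to_next_bounds T w r s t : normal_form T w ->
  vge v 0 r -> vge v 0 s -> vge v 0 t -> ~ wbounds (next_bounds T) (wshift w r s t).
Proof.
case: T => -[hw he] hr hs ht.
- exact: no_shift_from_II.
- exact: no_shift_from_III.
- exact: no_shift_from_IV.
- exact: no_shift_from_I0s.
- exact: no_shift_from_Ins (proj2 he).
- exact: no_shift_from_IVs.
- exact: no_shift_from_IIIs.
- exact: no_shift_from_IIs.
Qed.

Lemma normal_bounds_next T T' w : (tate_rank T < tate_rank T')%N ->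
  wbounds (normal_bounds T') w -> wbounds (next_bounds T) w.
Proof. by case: T; case: T' => //= _ hw; apply: wbounds_le hw _. Qed.

Lemma next_bounds_max T w : wbounds (1, 2, 3, 4, 6) w -> wbounds (next_bounds T) w.
Proof. by case: T => hw; apply: wbounds_le hw _. Qed.

(* If v(u) > 0, the integral model w' scaled back by u satisfies the bounds of
   every next step; otherwise v(Delta) can only grow. *)
Lemma normal_form_min_disc T w w' u r s t : normal_form T w -> wdisc w != 0 ->
  wiso_by w w' u r s t -> integral w' -> v (wdisc w) <= v (wdisc w').
Proof.
move=> hw disc_neq0 hiso hw'; have u_neq0 : u != 0 by case: hiso.
have [u1|u1] := classic (vge v 1 u).
  have u0 : vge v 0 u by apply: vgeW u1.
  have [hr hs ht] := wiso_by_integral hiso u0 (normal_form_integral hw) hw'.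
  case: (no_shift_to_next_bounds hw hr hs ht); apply: next_bounds_max.
  by rewrite (wshift_wiso_by hiso); apply: wbounds_le (wbounds_scale u1 hw') _.
have vu_le0 : v u <= 0.
  by rewrite leNgt; apply/negP => vu_gt0; apply: u1; right.
have disc'_neq0 := wdisc_wiso_by_neq0 hiso disc_neq0.
by rewrite (wdisc_wiso_by hiso) val_unit_scale //; lia.
Qed.

Section IntegralIsomorphism.
Variables (w w' : wcoef K) (u r s t : K).
Hypotheses (hiso : wiso_by w w' u r s t) (u0 : vge v 0 u).

Lemma integral_iso_rank_ge T T' : normal_form T w -> normal_form T' w' ->
  ~ (tate_rank T < tate_rank T')%N.
Proof.
move=> hw [hw' he'] lt_TT'.
have [hr hs ht] := wiso_by_integral hiso u0 (normal_form_integral hw)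
  (normal_form_integral (conj hw' he')).
apply: (no_shift_to_next_bounds hw hr hs ht); apply: (normal_bounds_next lt_TT').
rewrite (wshift_wiso_by hiso); move: hw'; case: (normal_bounds T') => [[[[k1 k2] k3] k4] k6].
by move=> /(wbounds_scale u0) hw'; apply: wbounds_le hw' _; rewrite !mul0r !add0r !lexx.
Qed.

Lemma integral_iso_not_I0s_Ins : normal_form KI0Star w -> ~ normal_form KInStar_pos w'.
Proof.
move=> hw hw'; have [hr hs ht] := wiso_by_integral hiso u0 (normal_form_integral hw)
  (normal_form_integral hw').
case: hw hw' => hw he [hw' [hd' _]].
apply: (no_shift_from_I0s_to_Ins hr hs ht hw he).
  by rewrite (wshift_wiso_by hiso); apply: wbounds_le (wbounds_scale u0 hw') _.
rewrite (wshift_wiso_by hiso) /wdelta /= disc_cubic_scale.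
by have := vgeM (vgeX 12 u0) hd'; rewrite mul0r add0r.
Qed.

End IntegralIsomorphism.

Lemma normal_form_type_unique T T' w w' u r s t :
  normal_form T w -> normal_form T' w' -> wiso_by w w' u r s t ->
  vge v 0 u -> ~ vge v 1 u -> T = T'.
Proof.
move=> hw hw' hiso u0 u1.
have hiso' := wiso_byV hiso.
have u'0 := vge0_unitV u0 u1.
case: (ltngtP (tate_rank T) (tate_rank T')) => [lt|lt|eq].
- by case: (integral_iso_rank_ge hiso u0 hw hw' lt).
- by case: (integral_iso_rank_ge hiso' u'0 hw' hw lt).
- move: hw hw' hiso hiso'; case: T eq; case: T' => //= _ hw hw' hiso hiso'.
  + by case: (integral_iso_not_I0s_Ins hiso u0 hw hw').
  + by case: (integral_iso_not_I0s_Ins hiso' u'0 hw' hw).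
Qed.

Lemma wiso_by_unit_of_disc w w' u r s t : wiso_by w w' u r s t -> wdisc w != 0 ->
  v (wdisc w) = v (wdisc w') -> vge v 0 u /\ ~ vge v 1 u.
Proof.
move=> hiso disc_neq0; have u_neq0 : u != 0 by case: hiso.
have disc'_neq0 := wdisc_wiso_by_neq0 hiso disc_neq0.
rewrite (wdisc_wiso_by hiso) val_unit_scale // => e.
have vu0 : v u = 0 by lia.
by split; [right; rewrite vu0 | case=> [/eqP|]; rewrite ?(negbTE u_neq0) ?vu0].
Qed.

(** * The invariant m *)

Lemma vge_iff_vq q (i : nat) (k : int) a : (0 < i)%N -> is_ceil (q * i%:R) k ->
  (a = 0 \/ q <= vq v a i) <-> vge v k a.
Proof. by move=> i_gt0 hk; rewrite /vq (is_ceil_le_div (v a) i_gt0 hk). Qed.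

Lemma vexact_iff_vq q (i : nat) (k : int) a : (0 < i)%N -> is_ceil (q * i%:R) k ->
  (a <> 0 /\ vq v a i = q) <-> (q * i%:R = k%:~R /\ vexact v k a).
Proof. by move=> i_gt0 hk; rewrite /vq (is_ceil_eq_div (v a) i_gt0 hk) /vexact; tauto. Qed.

Definition m_terms w : seq (K * nat) :=
  [:: (wa1 w, 1%N); (wa2 w, 2%N); (wa3 w, 3%N); (wa4 w, 4%N); (wa6 w, 6%N)].

Lemma forall_m_terms w (P : K * nat -> Prop) :
  (forall p, p \in m_terms w -> P p) <->
  P (wa1 w, 1%N) /\ P (wa2 w, 2%N) /\ P (wa3 w, 3%N) /\ P (wa4 w, 4%N) /\ P (wa6 w, 6%N).
Proof.
split=> [H|[? [? [? [? ?]]]] p]; first by do !split; apply: H; rewrite !inE eqxx ?orbT.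
by rewrite !inE => /orP[/eqP->|/orP[/eqP->|/orP[/eqP->|/orP[/eqP->|/eqP->]]]].
Qed.

Lemma exists_m_terms w (P : K * nat -> Prop) :
  (exists p, p \in m_terms w /\ P p) <->
  P (wa1 w, 1%N) \/ P (wa2 w, 2%N) \/ P (wa3 w, 3%N) \/ P (wa4 w, 4%N) \/ P (wa6 w, 6%N).
Proof.
split=> [[p []]|].
  by rewrite !inE => /orP[/eqP->|/orP[/eqP->|/orP[/eqP->|/orP[/eqP->|/eqP->]]]]; tauto.
by case=> [h|[h|[h|[h|h]]]]; eexists; (split; last exact: h); rewrite !inE eqxx ?orbT.
Qed.

Lemma m_isE w q (k1 k2 k3 k4 k6 : int) : ceil_multiples q k1 k2 k3 k4 k6 ->
  m_is v w q <-> wbounds (k1, k2, k3, k4, k6) w /\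
    (q * 1%:R = k1%:~R /\ vexact v k1 (wa1 w) \/ q * 2%:R = k2%:~R /\ vexact v k2 (wa2 w) \/
     q * 3%:R = k3%:~R /\ vexact v k3 (wa3 w) \/ q * 4%:R = k4%:~R /\ vexact v k4 (wa4 w) \/
     q * 6%:R = k6%:~R /\ vexact v k6 (wa6 w)).
Proof.
case=> c1 c2 c3 c4 c6.
have bound i k a := @vge_iff_vq q i k a.
have exact i k a := @vexact_iff_vq q i k a.
rewrite /m_is -/(m_terms w) forall_m_terms exists_m_terms /=.
rewrite (bound 1%N k1) ?(bound 2%N k2) ?(bound 3%N k3) ?(bound 4%N k4) ?(bound 6%N k6) //.
rewrite (exact 1%N k1) ?(exact 2%N k2) ?(exact 3%N k3) ?(exact 4%N k4) ?(exact 6%N k6) //.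
by split=> -[hw h]; split=> //; [case: hw => ? [? [? [? ?]]] | case: hw].
Qed.

Ltac m_is_cases c :=
  rewrite (m_isE _ c); intuition (try (exfalso; lra); try lra).

Lemma m_is_1_6E w :
  m_is v w (1%:Q / 6%:Q) <-> wbounds (1, 1, 1, 1, 1) w /\ vexact v 1 (wa6 w).
Proof. m_is_cases ceil_multiples_1_6. Qed.

Lemma m_is_1_4E w :
  m_is v w (1%:Q / 4%:Q) <-> wbounds (1, 1, 1, 1, 2) w /\ vexact v 1 (wa4 w).
Proof. m_is_cases ceil_multiples_1_4. Qed.

Lemma m_is_1_3E w : m_is v w (1%:Q / 3%:Q) <->
  wbounds (1, 1, 1, 2, 2) w /\ (vexact v 1 (wa3 w) \/ vexact v 2 (wa6 w)).
Proof. m_is_cases ceil_multiples_1_3. Qed.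

Lemma m_is_1_2E w : m_is v w (1%:Q / 2%:Q) <-> wbounds (1, 1, 2, 2, 3) w /\
  (vexact v 1 (wa2 w) \/ vexact v 2 (wa4 w) \/ vexact v 3 (wa6 w)).
Proof. m_is_cases ceil_multiples_1_2. Qed.

Lemma m_is_2_3E w : m_is v w (2%:Q / 3%:Q) <->
  wbounds (1, 2, 2, 3, 4) w /\ (vexact v 2 (wa3 w) \/ vexact v 4 (wa6 w)).
Proof. m_is_cases ceil_multiples_2_3. Qed.

Lemma m_is_3_4E w :
  m_is v w (3%:Q / 4%:Q) <-> wbounds (1, 2, 3, 3, 5) w /\ vexact v 3 (wa4 w).
Proof. m_is_cases ceil_multiples_3_4. Qed.

Lemma m_is_5_6E w :
  m_is v w (5%:Q / 6%:Q) <-> wbounds (1, 2, 3, 4, 5) w /\ vexact v 5 (wa6 w).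
Proof. m_is_cases ceil_multiples_5_6. Qed.

Section MinimumAttained.
Variables (a1 a2 a3 a4 a6 : K).
Let w := WCoef a1 a2 a3 a4 a6.

Lemma attained_of_b6_2 : wbounds (1, 1, 1, 2, 2) w -> vexact v 2 (wb6 w) ->
  vexact v 1 a3 \/ vexact v 2 a6.
Proof.
case=> /= h1 h2 h3 h4 h6 he.
case: (vge_split h3) => [|h3']; [by left | case: (vge_split h6) => [|h6']; first by right].
by case: (vexact_gt he (isT : 2 < 3 :> int)); rewrite /wb6 /=; vsolve.
Qed.

Lemma attained_of_delta_6 : wbounds (1, 1, 2, 2, 3) w -> vexact v 6 (wdelta w) ->
  vexact v 1 a2 \/ vexact v 2 a4 \/ vexact v 3 a6.
Proof.
case=> /= h1 h2 h3 h4 h6 he.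
case: (vge_split h2) => [|h2']; first by left.
case: (vge_split h4) => [|h4']; first by right; left.
case: (vge_split h6) => [|h6']; first by right; right.
by case: (vexact_gt he (isT : 6 < 7 :> int)); rewrite /wdelta /disc_cubic /=; vsolve.
Qed.

Lemma attained_of_invariant_2 : wbounds (1, 1, 2, 2, 3) w ->
  vexact v 2 (a2 ^+ 2 - 3%:R * a4) -> vexact v 1 a2 \/ vexact v 2 a4.
Proof.
case=> /= h1 h2 h3 h4 h6 he.
case: (vge_split h2) => [|h2']; [by left | case: (vge_split h4) => [|h4']; first by right].
by case: (vexact_gt he (isT : 2 < 3 :> int)); vsolve.
Qed.

Lemma attained_of_b6_4 : wbounds (1, 2, 2, 3, 4) w -> vexact v 4 (wb6 w) ->
  vexact v 2 a3 \/ vexact v 4 a6.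
Proof.
case=> /= h1 h2 h3 h4 h6 he.
case: (vge_split h3) => [|h3']; [by left | case: (vge_split h6) => [|h6']; first by right].
by case: (vexact_gt he (isT : 4 < 5 :> int)); rewrite /wb6 /=; vsolve.
Qed.

End MinimumAttained.

Lemma paper_condE T w : paper_cond v T w <-> normal_form T w.
Proof.
case: w => a1 a2 a3 a4 a6; case: T; rewrite /paper_cond /normal_form.
- exact: m_is_1_6E.
- exact: m_is_1_4E.
- split=> [[/m_is_1_3E[hw _] he] | [hw he]]; split=> //.
  by apply/m_is_1_3E; split; [exact: hw | exact: attained_of_b6_2 hw he].
- split=> [[/m_is_1_2E[hw _] he] | [hw he]]; split=> //.
  by apply/m_is_1_2E; split; [exact: hw | exact: attained_of_delta_6 hw he].
- split=> [[/m_is_1_2E[hw _] hd he] | [hw [hd he]]]; split=> //.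
  by apply/m_is_1_2E; split; [exact: hw | case: (attained_of_invariant_2 hw he); tauto].
- split=> [[/m_is_2_3E[hw _] he] | [hw he]]; split=> //.
  by apply/m_is_2_3E; split; [exact: hw | exact: attained_of_b6_4 hw he].
- exact: m_is_3_4E.
- exact: m_is_5_6E.
Qed.

(** * Tate's algorithm over a perfect residue field *)

Section PerfectResidueField.
Hypothesis Hperf : perfect_residue_field v.

Definition double_root_mod (b c d : K) : Prop :=
  exists r, [/\ vge v 0 r, vge v 1 (r ^+ 3 + b * r ^+ 2 + c * r + d)
              & vge v 1 (3%:R * r ^+ 2 + 2%:R * b * r + c)].

Section CubicDoubleRoot.
Variables (b c d : K).
Hypotheses (hb : vge v 0 b) (hc : vge v 0 c) (hd : vge v 0 d)
  (hD : vge v 1 (disc_cubic b c d)).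

(* In characteristic 2 the double root is a square root of c. *)
Lemma double_root_mod_char2 : vge v 1 (2%:R : K) -> double_root_mod b c d.
Proof.
move=> c2; have [y [hy hy2]] := Hperf (isT : prime 2) c2 hc.
have hbcd : vge v 1 (b * c + d).
  vroot 1%N 2%N 1%N.
  rewrite (_ : (b * c + d) ^+ 2 = disc_cubic b c d + 2%:R * (2%:R * c ^+ 3
    + 2%:R * b ^+ 3 * d + 14%:R * d ^+ 2 - 8%:R * b * c * d)); first by vsolve.
  by rewrite /disc_cubic; ring.
exists y; split => //.
  rewrite (_ : y ^+ 3 + b * y ^+ 2 + c * y + d = y * (y ^+ 2 - c) + b * (y ^+ 2 - c)
    + 2%:R * (c * y) + (b * c + d)); [vsolve | ring].
rewrite (_ : 3%:R * y ^+ 2 + 2%:R * b * y + c = 3%:R * (y ^+ 2 - c) + 2%:R * (b * y)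
  + 2%:R * (2%:R * c)); [vsolve | ring].
Qed.

(* In characteristic 3 the double root is -c/(2b), or a triple root, a cube
   root of -d, when b vanishes mod pi. *)
Lemma double_root_mod_char3 : vge v 1 (3%:R : K) -> double_root_mod b c d.
Proof.
move=> c3; have u2 := unit2_of_char3 c3.
have [b1|b1] := classic (vge v 1 b).
  have c1 : vge v 1 c.
    vroot 1%N 3%N 1%N; apply: (vge_unitXMl (k := 2) (vge0_nat 2) u2).
    rewrite (_ : 2%:R ^+ 2 * c ^+ 3 = b ^+ 2 * c ^+ 2 - 4%:R * b ^+ 3 * d
      - 3%:R * (9%:R * d ^+ 2 - 6%:R * b * c * d) - disc_cubic b c d);
      last by rewrite /disc_cubic; ring.
    vsolve.
  have [y [hy hy3]] := Hperf (isT : prime 3) c3 (vgeN hd).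
  exists y; split => //; last by vsolve.
  rewrite (_ : y ^+ 3 + b * y ^+ 2 + c * y + d = (y ^+ 3 - - d) + b * y ^+ 2 + c * y);
    [vsolve | ring].
pose B := 2%:R * b.
have B0 : vge v 0 B by rewrite /B; vsolve.
have B1 : ~ vge v 1 B := unitM (vge0_nat 2) u2 hb b1.
have B' := vge0_unitV B0 B1; have b_neq0 := unit_neq0 b1; have two_neq0 := unit_neq0 u2.
exists (- c / B); split; first by vsolve.
  apply: (vge_unitXMl (k := 3) B0 B1).
  rewrite (_ : B ^+ 3 * ((- c / B) ^+ 3 + b * (- c / B) ^+ 2 + c * (- c / B) + d) =
    - (2%:R * disc_cubic b c d + 3%:R * (3%:R * c ^+ 3 + 18%:R * d ^+ 2
       - 12%:R * b * c * d))); first by vsolve.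
  by rewrite /disc_cubic /B; field; rewrite b_neq0 two_neq0.
rewrite (_ : 3%:R * (- c / B) ^+ 2 + 2%:R * b * (- c / B) + c = 3%:R * (- c / B) ^+ 2);
  first by vsolve.
by rewrite /B; field; rewrite b_neq0 two_neq0.
Qed.

(* Otherwise, with the depressed cubic x^3 + p x + q (x = r + b/3), the double
   root is -3q/(2p) - b/3, or the triple root -b/3 when p vanishes mod pi. *)
Lemma double_root_mod_char_ne23 : ~ vge v 1 (2%:R : K) -> ~ vge v 1 (3%:R : K) ->
  double_root_mod b c d.
Proof.
move=> u2 u3; have two_neq0 := unit_neq0 u2; have three_neq0 := unit_neq0 u3.
have i3 := vge0_unitV (vge0_nat 3) u3.
pose p := c - b ^+ 2 * 3%:R^-1.
pose q := 2%:R * b ^+ 3 * 3%:R^-1 ^+ 3 - b * c * 3%:R^-1 + d.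
have hp : vge v 0 p by rewrite /p; vsolve.
have hq : vge v 0 q by rewrite /q; vsolve.
have eD : disc_cubic b c d = - 4%:R * p ^+ 3 - 27%:R * q ^+ 2.
  by rewrite /disc_cubic /p /q; field.
have [p1|p1] := classic (vge v 1 p).
  have q1 : vge v 1 q.
    vroot 1%N 2%N 1%N; apply: (vge_unitXMl (k := 3) (vge0_nat 3) u3).
    by rewrite (_ : 3%:R ^+ 3 * q ^+ 2 = - disc_cubic b c d - 4%:R * p ^+ 3);
      [vsolve | rewrite eD; ring].
  exists (- b * 3%:R^-1); split; first by vsolve.
    by rewrite (_ : _ + d = q) // /q; field.
  by rewrite (_ : _ + c = p) // /p; field.
pose P := 2%:R * p.
have P0 : vge v 0 P by rewrite /P; vsolve.
have P1 : ~ vge v 1 P := unitM (vge0_nat 2) u2 hp p1.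
have P' := vge0_unitV P0 P1.
have cb_neq0 : c * 3%:R - b ^+ 2 != 0.
  have ep : p = (c * 3%:R - b ^+ 2) / 3%:R by rewrite /p; field.
  by apply/eqP => cb0; move: (unit_neq0 P1); rewrite /P ep cb0 mul0r mulr0 eqxx.
exists (- 3%:R * q / P - b * 3%:R^-1); split; first by vsolve.
  apply: (vge_unitXMl (k := 3) P0 P1).
  rewrite (_ : P ^+ 3 * _ = q * disc_cubic b c d); first by vsolve.
  by rewrite eD /P /q /p; field; rewrite three_neq0 two_neq0 cb_neq0.
apply: (vge_unitXMl (k := 2) P0 P1).
rewrite (_ : P ^+ 2 * _ = - disc_cubic b c d); first by vsolve.
by rewrite eD /P /q /p; field; rewrite three_neq0 two_neq0 cb_neq0.
Qed.

Lemma double_root_mod_of_disc : double_root_mod b c d.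
Proof.
have [c2|u2] := classic (vge v 1 (2%:R : K)); first exact: double_root_mod_char2.
have [c3|u3] := classic (vge v 1 (3%:R : K)); first exact: double_root_mod_char3.
exact: double_root_mod_char_ne23.
Qed.

End CubicDoubleRoot.

Lemma vge_div_uniformizer pi k m (n : nat) x : pi != 0 -> v pi = 1 ->
  vge v m x -> k + n%:Z <= m -> vge v k (x / pi ^+ n).
Proof.
move=> pi_neq0 vpi [->|hx] le_km; first by rewrite mul0r; left.
have [->|x_neq0] := eqVneq x 0; first by rewrite mul0r; left.
have pin_neq0 : pi ^+ n != 0 by rewrite expf_neq0.
have : v (pi ^+ n * (pi ^+ n)^-1) = v (pi ^+ n) + v (pi ^+ n)^-1 by rewrite valM // invr_eq0.
rewrite mulfV // val1 valX // vpi => e.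
by right; rewrite valM ?invr_eq0 //; lia.
Qed.

(* Divide out the uniformizer: P(T) = F(pi T) / pi^3 has a double root mod pi. *)
Lemma P_multiple_root_of_disc w : wbounds (1, 1, 2, 2, 3) w -> vge v 7 (wdelta w) ->
  P_multiple_root v w.
Proof.
case: w => a1 a2 a3 a4 a6 [] /= _ h2 _ h4 h6 hD.
case: (Hv) => _ _ [pi [/eqP pi_neq0 vpi]].
have hpi : vge v 1 pi by right; rewrite vpi.
pose b := a2 / pi ^+ 1; pose c := a4 / pi ^+ 2; pose d := a6 / pi ^+ 3.
have hb : vge v 0 b by apply: vge_div_uniformizer pi_neq0 vpi h2 _; lia.
have hc : vge v 0 c by apply: vge_div_uniformizer pi_neq0 vpi h4 _; lia.
have hd : vge v 0 d by apply: vge_div_uniformizer pi_neq0 vpi h6 _; lia.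
have eb : a2 = pi * b by rewrite /b expr1 mulrC divfK.
have ec : a4 = pi ^+ 2 * c by rewrite /c mulrC divfK // expf_neq0.
have ed : a6 = pi ^+ 3 * d by rewrite /d mulrC divfK // expf_neq0.
have hD' : vge v 1 (disc_cubic b c d).
  rewrite (_ : disc_cubic b c d = disc_cubic a2 a4 a6 / pi ^+ 6);
    last by rewrite eb ec ed /disc_cubic; field.
  by apply: vge_div_uniformizer pi_neq0 vpi hD _; lia.
have [r [hr hP hP']] := double_root_mod_of_disc hb hc hd hD'.
exists (pi * r); rewrite /wF /wF' /=; split; first by vsolve.
  by rewrite (_ : _ + a6 = pi ^+ 3 * (r ^+ 3 + b * r ^+ 2 + c * r + d));
    [vsolve | rewrite eb ec ed; ring].
by rewrite (_ : _ + a4 = pi ^+ 2 * (3%:R * r ^+ 2 + 2%:R * b * r + c));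
  [vsolve | rewrite eb ec; ring].
Qed.

Lemma Q_multiple_root_of_b6 w : vge v 2 (wa3 w) -> vge v 4 (wa6 w) ->
  vge v 5 (wb6 w) -> Q_multiple_root v w.
Proof.
case: w => a1 a2 a3 a4 a6 /= h3 h6; rewrite /wb6 /= => hb6.
rewrite /Q_multiple_root /wG /=.
have [c2|u2] := classic (vge v 1 (2%:R : K)).
  have h3' : vge v 3 a3.
    vroot 3%N 2%N 5%N.
    by rewrite (_ : a3 ^+ 2 = (a3 ^+ 2 + 4%:R * a6) - 2%:R * (2%:R * a6)); [vsolve | ring].
  case: (Hv) => _ _ [pi [/eqP pi_neq0 vpi]].
  have hpi : vge v 1 pi by right; rewrite vpi.
  pose d := a6 / pi ^+ 4.
  have hd : vge v 0 d by apply: vge_div_uniformizer pi_neq0 vpi h6 _; lia.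
  have ed : a6 = pi ^+ 4 * d by rewrite /d mulrC divfK // expf_neq0.
  have [y [hy hy2]] := Hperf (isT : prime 2) c2 hd.
  exists (pi ^+ 2 * y); split; [vsolve | | vsolve].
  by rewrite (_ : _ - a6 = pi ^+ 4 * (y ^+ 2 - d) + a3 * (pi ^+ 2 * y));
    [vsolve | rewrite ed; ring].
have two_neq0 := unit_neq0 u2; have i2 := vge0_unitV (vge0_nat 2) u2.
exists (- a3 * 2%:R^-1); split; first by vsolve.
  by rewrite (_ : _ - a6 = - (a3 ^+ 2 + 4%:R * a6) * 2%:R^-1 ^+ 2); [vsolve | field].
by rewrite (_ : _ + a3 = 0); [left | field].
Qed.

Lemma disc_of_P_multiple_root w : P_multiple_root v w -> vge v 1 (wa2 w) ->
  vge v 7 (wdelta w).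
Proof.
case: w => a1 a2 a3 a4 a6 [rho [hr]]; rewrite /wF /wF' /wdelta /= => hF hF' h2.
have hB : vge v 1 (a2 + 3%:R * rho) by vsolve.
rewrite (_ : disc_cubic a2 a4 a6 = disc_cubic (a2 + 3%:R * rho)
  (3%:R * rho ^+ 2 + 2%:R * a2 * rho + a4) (rho ^+ 3 + a2 * rho ^+ 2 + a4 * rho + a6));
  last by rewrite /disc_cubic; ring.
rewrite /disc_cubic; vsolve.
Qed.

Lemma complete_square_mod (a1 a2 : K) : vge v 0 a1 -> vge v 0 a2 ->
  vge v 1 (a1 ^+ 2 + 4%:R * a2) ->
  exists s, [/\ vge v 0 s, vge v 1 (a1 + 2%:R * s) & vge v 1 (a2 - s * a1 - s ^+ 2)].
Proof.
move=> h1 h2 hb.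
have [c2|u2] := classic (vge v 1 (2%:R : K)).
  have h1' : vge v 1 a1.
    vroot 1%N 2%N 1%N.
    by rewrite (_ : a1 ^+ 2 = (a1 ^+ 2 + 4%:R * a2) - 2%:R * (2%:R * a2)); [vsolve | ring].
  have [y [hy hy2]] := Hperf (isT : prime 2) c2 h2.
  exists y; split => //; first by vsolve.
  by rewrite (_ : a2 - y * a1 - y ^+ 2 = - (y ^+ 2 - a2) - y * a1); [vsolve | ring].
have two_neq0 := unit_neq0 u2; have i2 := vge0_unitV (vge0_nat 2) u2.
exists (- a1 * 2%:R^-1); split; first by vsolve.
  by rewrite (_ : a1 + _ = 0); [left | field].
by rewrite (_ : a2 - _ - _ = (a1 ^+ 2 + 4%:R * a2) * 2%:R^-1 ^+ 2); [vsolve | field].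
Qed.

Lemma a4_of_b8 w : wbounds (1, 1, 1, 1, 2) w -> vge v 3 (wb8 w) -> vge v 2 (wa4 w).
Proof.
case: w => a1 a2 a3 a4 a6 [] /= h1 h2 h3 h4 h6; rewrite /wb8 /= => hb8.
vroot 2%N 2%N 3%N.
rewrite (_ : a4 ^+ 2 = (a1 ^+ 2 * a6 + 4%:R * a2 * a6 - a1 * a3 * a4 + a2 * a3 ^+ 2)
  - (a1 ^+ 2 * a6 + 4%:R * a2 * a6 - a1 * a3 * a4 + a2 * a3 ^+ 2 - a4 ^+ 2)); [vsolve | ring].
Qed.

Lemma b8_of_bounds w : wbounds (1, 1, 1, 2, 2) w -> vge v 3 (wb8 w).
Proof. by case: w => a1 a2 a3 a4 a6 [] /= *; rewrite /wb8 /=; vsolve. Qed.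

Lemma P_triple_root_of_invariant w : P_multiple_root v w ->
  vge v 3 (wa2 w ^+ 2 - 3%:R * wa4 w) -> P_triple_root v w.
Proof.
case: w => a1 a2 a3 a4 a6 [rho [hr hF hF']] /= hI; exists rho; split => //.
rewrite /wF' /= in hF'; vroot 2%N 2%N 3%N.
rewrite (_ : (a2 + 3%:R * rho) ^+ 2 = (a2 ^+ 2 - 3%:R * a4)
  + 3%:R * (3%:R * rho ^+ 2 + 2%:R * a2 * rho + a4)); [vsolve | ring].
Qed.

Lemma invariant_of_P_triple_root w : P_triple_root v w ->
  vge v 3 (wa2 w ^+ 2 - 3%:R * wa4 w).
Proof.
case: w => a1 a2 a3 a4 a6 [rho [hr _ hF' hT]] /=; rewrite /wF' /= in hF'.
rewrite (_ : a2 ^+ 2 - 3%:R * a4 = (a2 + 3%:R * rho) ^+ 2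
  - 3%:R * (3%:R * rho ^+ 2 + 2%:R * a2 * rho + a4)); [vsolve | ring].
Qed.

Lemma b6_of_Q_multiple_root w : Q_multiple_root v w -> vge v 5 (wb6 w).
Proof.
case: w => a1 a2 a3 a4 a6 [sigma [hs hG hG']]; rewrite /wb6 /=; rewrite /wG /= in hG.
rewrite (_ : a3 ^+ 2 + 4%:R * a6 = (2%:R * sigma + a3) ^+ 2
  - 4%:R * (sigma ^+ 2 + a3 * sigma - a6)); [vsolve | ring].
Qed.

Lemma normal_form_tate T w : normal_form T w -> tate_cond v T w.
Proof.
case: T; case: w => a1 a2 a3 a4 a6 [] /=; rewrite /normal_exact /=.
- move=> [] h1 h2 h3 h4 h6 he; split; last exact: vexact_gt he _.
  by split => //; rewrite /wb2 /=; vsolve.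
- move=> hw he; case: (hw) => /= h1 h2 h3 h4 h6.
  split; [by split => //; rewrite /wb2 /=; vsolve | done |].
  by move/(a4_of_b8 (w := WCoef a1 a2 a3 a4 a6) hw); apply: vexact_gt he _.
- move=> hw he; case: (hw) => /= h1 h2 h3 h4 h6.
  split; [by split => //; rewrite /wb2 /=; vsolve | done | | exact: vexact_gt he _].
  exact: (b8_of_bounds (w := WCoef a1 a2 a3 a4 a6) hw).
- move=> hw he; split => // hP; case: (hw) => /= _ h2 _ _ _.
  exact: vexact_gt he _ (disc_of_P_multiple_root hP h2).
- move=> hw [hd he]; split => //; first exact: P_multiple_root_of_disc.
  by move/invariant_of_P_triple_root; apply: vexact_gt he _.
- move=> [] h1 h2 h3 h4 h6 he; do 2!split=> //.
  by move/b6_of_Q_multiple_root; apply: vexact_gt he _.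
- by move=> [] h1 h2 h3 h4 h6 he; do 2!split=> //; apply: vexact_gt he _.
- by move=> [] h1 h2 h3 h4 h6 he; do 2!split=> //; apply: vexact_gt he _.
Qed.

Lemma wshift_s (a1 a2 a3 a4 a6 s : K) : wshift (WCoef a1 a2 a3 a4 a6) 0 s 0 =
  WCoef (a1 + 2%:R * s) (a2 - s * a1 - s ^+ 2) a3 (a4 - s * a3) a6.
Proof. by rewrite /wshift /=; congr WCoef; ring. Qed.

Lemma wb6_wshift_s w s : wb6 (wshift w 0 s 0) = wb6 w.
Proof. by case: w => *; rewrite wshift_s. Qed.

Lemma wb8_wshift_s w s : wb8 (wshift w 0 s 0) = wb8 w.
Proof. by case: w => *; rewrite wshift_s /wb8 /=; ring. Qed.

Lemma tate_A_shift (a1 a2 a3 a4 a6 : K) : integral (WCoef a1 a2 a3 a4 a6) ->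
  tate_A v (WCoef a1 a2 a3 a4 a6) -> exists s,
  wbounds (1, 1, 1, 1, 1) (WCoef (a1 + 2%:R * s) (a2 - s * a1 - s ^+ 2) a3 (a4 - s * a3) a6).
Proof.
move=> [] /= h1 h2 h3 h4 h6 [] /= g3 g4 g6 gb.
have [s [hs hA1 hA2]] := complete_square_mod h1 h2 gb.
by exists s; split => //=; vsolve.
Qed.

Lemma normal_form_II_of_tate w : integral w -> tate_cond v KII w ->
  exists s, normal_form KII (wshift w 0 s 0).
Proof.
case: w => a1 a2 a3 a4 a6 hw [hA h6]; have [s hs] := tate_A_shift hw hA.
by exists s; rewrite wshift_s; split => //; apply: vexactP => //; case: hs.
Qed.

Lemma normal_form_III_of_tate w : integral w -> tate_cond v KIII w ->
  exists s, normal_form KIII (wshift w 0 s 0).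
Proof.
move=> hw [hA h6 hb8]; move: hw hA h6 hb8.
case: w => a1 a2 a3 a4 a6 hw hA h6 hb8; have [s hs] := tate_A_shift hw hA.
exists s; rewrite -(wb8_wshift_s _ s) wshift_s in hb8 *.
split; first by case: hs.
apply: vexactP; first by case: hs.
by move=> h4; apply: hb8; apply: b8_of_bounds; case: hs => *; split.
Qed.

Lemma normal_form_IV_of_tate w : integral w -> tate_cond v KIV w ->
  exists s, normal_form KIV (wshift w 0 s 0).
Proof.
case: w => a1 a2 a3 a4 a6 hw [hA h6 hb8 hb6]; have [s hs] := tate_A_shift hw hA.
exists s; rewrite -(wb8_wshift_s _ s) -(wb6_wshift_s _ s) wshift_s in hb8 hb6 *.
have h4 : vge v 2 (a4 - s * a3) by apply: (a4_of_b8 _ hb8); case: hs => *; split.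
case: hs => /= h1 h2 h3 _ _; split; first by split.
by apply: vexactP => //; rewrite /wb6 /=; vsolve.
Qed.

Lemma normal_form_of_tate_star T w : (2 < tate_rank T)%N -> tate_cond v T w ->
  normal_form T w.
Proof.
case: T => //= _; case: w => a1 a2 a3 a4 a6.
- case=> hw hP; split => //; apply: vexactP.
    by case: hw => /= *; rewrite /wdelta /disc_cubic /=; vsolve.
  by move=> hd; apply: hP; apply: P_multiple_root_of_disc.
- case=> hw hP hT; split => //; split; first by apply: disc_of_P_multiple_root hP _; case: hw.
  apply: vexactP; first by case: hw => /= *; vsolve.
  by move=> hI; apply: hT; apply: P_triple_root_of_invariant.
- case=> h1 [h2 h3 h4 h6 hQ]; split; first by split.
  apply: vexactP; first by rewrite /wb6 /=; vsolve.
  by move=> hb6; apply: hQ; apply: Q_multiple_root_of_b6.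
- by case=> h1 [h2 h3 h4 h6 h4']; split; [split | apply: vexactP].
- by case=> h1 [h2 h3 h4 h6 h6']; split; [split | apply: vexactP].
Qed.

Lemma tate_normal_form T w : integral w -> tate_cond v T w ->
  exists w' u r s t, wiso_by w w' u r s t /\ normal_form T w'.
Proof.
move=> hw hT; case: (ltnP 2 (tate_rank T)) => [star | rank_le2].
  by exists w, 1, 0, 0, 0; split; [apply: wiso_by_refl | apply: normal_form_of_tate_star].
have [s hs] : exists s, normal_form T (wshift w 0 s 0).
  case: T rank_le2 hT => // _ hT.
  - exact: normal_form_II_of_tate.
  - exact: normal_form_III_of_tate.
  - exact: normal_form_IV_of_tate.
by exists (wshift w 0 s 0), 1, 0, s, 0; split => //; apply: wiso_by_shift.
Qed.

(** * Minimal models and Kodaira types *)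

Lemma kodaira_normal_form w0 T : kodaira_type v w0 T ->
  exists w u r s t, wiso_by w0 w u r s t /\ normal_form T w.
Proof.
case=> w1 [/wisoE [u1 [r1 [s1 [t1 hiso1]]]] /integralE hw1 hT].
have [w [u [r [s [t [hiso hw]]]]]] := tate_normal_form hw1 hT.
by exists w; do 4!eexists; split; [apply: wiso_by_trans hiso1 hiso | exact: hw].
Qed.

End PerfectResidueField.

Lemma minimal_model_of_normal_form T w0 w u r s t : wdisc w0 != 0 ->
  wiso_by w0 w u r s t -> normal_form T w -> minimal_model v w0 w.
Proof.
move=> disc_neq0 hiso hw; split; first by apply/wisoE; exists u, r, s, t.
  exact/integralE/(normal_form_integral hw).
move=> w' /wisoE [u' [r' [s' [t' hiso']]]] /integralE hw'.
apply: normal_form_min_disc hw (wdisc_wiso_by_neq0 hiso disc_neq0) _ hw'.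
exact: wiso_by_trans (wiso_byV hiso) hiso'.
Qed.

(* Two normal forms of the same curve are both minimal, so they differ by a
   unit scaling. *)
Lemma normal_forms_type_eq T T' w0 w w' u r s t u' r' s' t' : wdisc w0 != 0 ->
  wiso_by w0 w u r s t -> normal_form T w ->
  wiso_by w0 w' u' r' s' t' -> normal_form T' w' -> T = T'.
Proof.
move=> disc_neq0 hiso hw hiso' hw'.
have hww' := wiso_by_trans (wiso_byV hiso) hiso'.
have disc_w := wdisc_wiso_by_neq0 hiso disc_neq0.
have disc_w' := wdisc_wiso_by_neq0 hiso' disc_neq0.
have le_ww' := normal_form_min_disc hw disc_w hww' (normal_form_integral hw').
have le_w'w := normal_form_min_disc hw' disc_w' (wiso_byV hww') (normal_form_integral hw).
have [u0 u1] := wiso_by_unit_of_disc hww' disc_w (le_anti (introT andP (conj le_ww' le_w'w))).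
exact: normal_form_type_unique hw hw' hww' u0 u1.
Qed.

Lemma additive_minimal_model_paper_cond (Hperf : perfect_residue_field v) w0 :
  wdisc w0 != 0 -> additive_reduction v w0 ->
  exists w, minimal_model v w0 w /\ (forall T, kodaira_type v w0 T -> paper_cond v T w).
Proof.
move=> disc_neq0 [wm [hmin _ _]].
have [[T /(kodaira_normal_form Hperf) [w [u [r [s [t [hiso hw]]]]]]]|no_type] :=
  classic (exists T, kodaira_type v w0 T); last first.
  by exists wm; split => // T hT; case: no_type; exists T.
exists w; split; first exact: minimal_model_of_normal_form hiso hw.
move=> T' /(kodaira_normal_form Hperf) [w' [u' [r' [s' [t' [hiso' hw']]]]]].
by rewrite -(normal_forms_type_eq disc_neq0 hiso hw hiso' hw'); apply/paper_condE.
Qed.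

Lemma paper_cond_minimal_kodaira (Hperf : perfect_residue_field v) w T :
  wdisc w != 0 -> paper_cond v T w -> minimal_model v w w /\ kodaira_type v w T.
Proof.
move=> disc_neq0 /paper_condE hw; split.
  exact: minimal_model_of_normal_form disc_neq0 (wiso_by_refl w) hw.
exists w; split; [by apply/wisoE; exists 1, 0, 0, 0; apply: wiso_by_refl | |].
  exact/integralE/(normal_form_integral hw).
exact: normal_form_tate.
Qed.

End Valuation.

Theorem theorem1 (K : fieldType) (v : K -> int)
  (Hv : normalized_discrete_valuation v)
  (Hcomplete : complete_valuation v)
  (Hperfect : perfect_residue_field v) :
  (forall w0 : wcoef K, wdisc w0 <> 0 -> additive_reduction v w0 ->
     exists w : wcoef K, minimal_model v w0 w /\
       (forall T : additive_kodaira, kodaira_type v w0 T -> paper_cond v T w))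
  /\
  (forall w : wcoef K, wdisc w <> 0 ->
     forall T : additive_kodaira, paper_cond v T w ->
       minimal_model v w w /\ kodaira_type v w T).
Proof.
split=> [w0 /eqP disc_neq0 | w /eqP disc_neq0 T].
  exact: additive_minimal_model_paper_cond.
exact: paper_cond_minimal_kodaira.
Qed.
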